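(* Let $f:[0,\infty)\to\mathbb{C}$ be smooth with support in $[0,\rho]$ for some $\rho<1$, and for $j\in\mathbb{N}_0$, $t\in(0,1)$ let $$G_{0,j}(t)=\int_{1-t}^{1}u f(u)\,(u^{2}+1-t^{2})^{j}\,\mathrm{d}u.$$ Then for every $r\geq 0$ and $t\in(0,1)$, $$\left[\frac{\mathrm{d}}{\mathrm{d} t}D^{r}G_{0,r}\right](t)=2^{r}(-1)^{r}r!\sum_{m=0}^{r}\sum_{\nu=m}^{r}\sum_{l=\nu}^{r}\frac{1}{2^{\nu-m}m!}\binom{l+1}{\nu+1}\binom{l+\nu-m}{\nu-m}\frac{1}{t^{l}}\frac{(1-t)^{\nu+1}}{t^{\nu-m}}f^{(m)}(1-t).$$
   Context: $D$ denotes the operator $(D\varphi)(t)=\frac{1}{t}\varphi'(t)$ and $D^{r}$ its $r$-fold iterate ($D^0$ is the identity). $\binom{a}{b}=0$ if $b>a$ or $b<0$. *)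

From Stdlib Require Import Reals.
From Coquelicot Require Import Coquelicot.
Open Scope R_scope.

Definition binom (a b : nat) : R :=
  if (b <=? a)%nat then Binomial.C a b else 0.

(* f : [0,oo) -> C is smooth: real and imaginary parts are infinitely
   differentiable at every point of (0,oo) (only values on (0,1] matter). *)
Definition smooth_pos (f : R -> C) : Prop :=
  forall (n : nat) (x : R), 0 < x ->
    ex_derive_n (fun y => Re (f y)) n x /\ ex_derive_n (fun y => Im (f y)) n x.

Definition Cderive (phi : R -> C) (t : R) : C :=
  (Derive (fun y => Re (phi y)) t, Derive (fun y => Im (phi y)) t).

Definition Cderive_n (phi : R -> C) (n : nat) (t : R) : C :=
  (Derive_n (fun y => Re (phi y)) n t, Derive_n (fun y => Im (phi y)) n t).

Definition Dop (phi : R -> C) : R -> C :=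
  fun t => scal (/ t) (Cderive phi t).

Definition Dpow (r : nat) (phi : R -> C) : R -> C := Nat.iter r Dop phi.

Definition G0 (f : R -> C) (j : nat) (t : R) : C :=
  RInt (V := C_R_CompleteNormedModule)
    (fun u => scal (u * (u ^ 2 + 1 - t ^ 2) ^ j) (f u)) (1 - t) 1.

Definition rhs35 (f : R -> C) (r : nat) (t : R) : C :=
  scal (2 ^ r * (-1) ^ r * INR (Factorial.fact r))
    (sum_n_m (G := C_AbelianMonoid) (fun m =>
      sum_n_m (G := C_AbelianMonoid) (fun nu =>
        sum_n_m (G := C_AbelianMonoid) (fun l =>
          scal (/ (2 ^ (nu - m) * INR (Factorial.fact m))
                * binom (l + 1) (nu + 1)
                * binom (l + nu - m) (nu - m)
                * / (t ^ l)
                * ((1 - t) ^ (nu + 1) / t ^ (nu - m)))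
               (Cderive_n f m (1 - t)))
        nu r)
      m r)
    0 r).

From Stdlib Require Import Reals Arith Lia Lra Factorial.
From Coquelicot Require Import Coquelicot.
Open Scope R_scope.

(* Treat the real and imaginary parts of f separately and put psi_p(t) = (1-t)^p f(1-t) / t.
   The boundary term of the integral and the derivative of the integrand give
   D G_{0,j} = 2^j psi_{j+1} - 2 j G_{0,j-1}, so that
     D^(r+1) G_{0,r} = sum_(i <= r) (-2)^i r (r-1) ... (r-i+1) 2^(r-i) D^(r-i) psi_(r-i+1),
   the remaining multiple of G_{0,-1} carrying the factor r (r-1) ... 0.  Moreover D^n psi_p is a
   combination of the functions t^(i+m-2n-1) (1-t)^(p-i) f^(m)(1-t), whose coefficients satisfy a
   three-term recurrence solved by (-1)^n p (p-1) ... (p-i+1) (i+m+2d)! / (i! m! 2^d d!),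
   d = n-i-m.  As d/dt = t D, the claim follows by taking p = n+1 and reindexing the triple sum. *)

Definition shiftr (u : nat -> R) (i : nat) : R :=
  match i with O => 0 | S k => u k end.

Lemma sum_f_R0_trunc (u : nat -> R) (l N : nat) :
  (l <= N)%nat -> (forall i, (l < i <= N)%nat -> u i = 0) -> sum_f_R0 u N = sum_f_R0 u l.
Proof.
  induction N as [|N IH]; intros HlN Hu.
  - now replace l with O by lia.
  - destruct (Nat.eq_dec l (S N)) as [->|Hne]; [reflexivity|].
    simpl. rewrite Hu, IH by (try intros; try apply Hu; lia). ring.
Qed.

Lemma sum_f_R0_double_trunc (u : nat -> nat -> R) (n N : nat) : (n <= N)%nat ->
  (forall i m, (n < i + m)%nat -> u i m = 0) ->
  sum_f_R0 (fun i => sum_f_R0 (u i) N) N = sum_f_R0 (fun i => sum_f_R0 (u i) n) n.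
Proof.
  intros HnN Hu. rewrite (sum_f_R0_trunc _ n N HnN).
  - apply sum_eq. intros i Hi. apply sum_f_R0_trunc; [exact HnN|]. intros m Hm. apply Hu. lia.
  - intros i Hi. apply sum_eq_R0. intros m _. apply Hu. lia.
Qed.

Lemma sum_f_R0_swap (u : nat -> nat -> R) (M N : nat) :
  sum_f_R0 (fun i => sum_f_R0 (fun j => u i j) N) M =
  sum_f_R0 (fun j => sum_f_R0 (fun i => u i j) M) N.
Proof. induction M as [|M IH]; simpl; [reflexivity|]. now rewrite IH, <- sum_plus. Qed.

Lemma sum_f_R0_shiftr_mul (a g : nat -> R) (N : nat) :
  a N = 0 -> sum_f_R0 (fun i => shiftr a i * g i) N = sum_f_R0 (fun i => a i * g (S i)) N.
Proof.
  intros HN. destruct N as [|N]; [simpl; rewrite HN; ring|].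
  rewrite decomp_sum, tech5, HN by lia. cbn [pred shiftr]. ring.
Qed.

Lemma sum_f_R0_triangle (u : nat -> nat -> R) (r : nat) :
  sum_f_R0 (fun j => sum_f_R0 (fun i => u i j) j) r = sum_f_R0 (fun i => sum_n_m (u i) i r) r.
Proof.
  induction r as [|r IH]; simpl.
  - now rewrite (sum_n_n (G := R_AbelianMonoid)).
  - rewrite IH, (sum_n_n (G := R_AbelianMonoid)).
    rewrite (sum_eq (fun i => sum_n_m (u i) i (S r)) (fun i => sum_n_m (u i) i r + u i (S r)))
      by (intros i Hi; apply (sum_n_Sm (G := R_AbelianMonoid)); lia).
    rewrite sum_plus. ring.
Qed.

Lemma sum_n_m_sum_f_R0 (u : nat -> nat -> R) (N a b : nat) :
  sum_n_m (fun l => sum_f_R0 (fun m => u m l) N) a b = sum_f_R0 (fun m => sum_n_m (u m) a b) N.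
Proof.
  induction N as [|N IH]; simpl; [reflexivity|].
  rewrite <- IH. apply (sum_n_m_plus (G := R_AbelianMonoid)).
Qed.

Lemma sum_f_R0_triangle3 (u : nat -> nat -> nat -> R) (r : nat) :
  sum_f_R0 (fun l => sum_f_R0 (fun nu => sum_f_R0 (fun m => u m nu l) nu) l) r =
  sum_n_m (fun m => sum_n_m (fun nu => sum_n_m (u m nu) nu r) m r) 0 r.
Proof.
  rewrite sum_f_R0_triangle.
  rewrite (sum_eq _ (fun nu => sum_f_R0 (fun m => sum_n_m (u m nu) nu r) nu))
    by (intros; apply sum_n_m_sum_f_R0).
  rewrite sum_f_R0_triangle, <- sum_n_Reals. reflexivity.
Qed.

Lemma is_derive_sum_f_R0 (u : nat -> R -> R) (du : nat -> R) (N : nat) (t : R) :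
  (forall i, (i <= N)%nat -> is_derive (u i) t (du i)) ->
  is_derive (fun y => sum_f_R0 (fun i => u i y) N) t (sum_f_R0 du N).
Proof.
  induction N as [|N IH]; intros Hu; simpl; [now apply Hu|].
  apply (is_derive_plus (fun y => sum_f_R0 (fun i => u i y) N) (u (S N))).
  - apply IH; intros; apply Hu; lia.
  - apply Hu; lia.
Qed.

(** * The coefficients of D^n psi_p *)

Fixpoint falling (p i : nat) : R :=
  match i with O => 1 | S i => falling p i * INR (p - i) end.

Lemma falling_fact (p i : nat) : (i <= p)%nat -> falling p i = INR (fact p) / INR (fact (p - i)).
Proof.
  induction i as [|i IH]; intros Hi; simpl falling.
  - rewrite Nat.sub_0_r. field. apply INR_fact_neq_0.
  - rewrite IH by lia. replace (p - i)%nat with (S (p - S i)) by lia.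
    rewrite fact_simpl, mult_INR. field. split; [apply INR_fact_neq_0 | apply not_0_INR; lia].
Qed.

Definition wcoef (d i m : nat) : R :=
  INR (fact (i + m + 2 * d)) / (INR (fact i) * INR (fact m) * 2 ^ d * INR (fact d)).

Definition ucoef (n i m : nat) : R :=
  if (i + m <=? n)%nat then wcoef (n - (i + m)) i m else 0.

Definition psi_coef (p n i m : nat) : R := (-1) ^ n * falling p i * ucoef n i m.

Lemma wcoef_sym (d i m : nat) : wcoef d i m = wcoef d m i.
Proof.
  unfold wcoef. rewrite (Nat.add_comm m i). field.
  repeat split; try apply INR_fact_neq_0; apply pow_nonzero; lra.
Qed.

Lemma wcoef_S (d i m : nat) :
  wcoef (S d) i m =
    INR (i + m + 2 * d + 1) * INR (i + m + 2 * d + 2) / (2 * INR (S d)) * wcoef d i m.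
Proof.
  unfold wcoef. replace (i + m + 2 * S d)%nat with (S (S (i + m + 2 * d))) by lia.
  rewrite !fact_simpl, !mult_INR.
  replace (i + m + 2 * d + 1)%nat with (S (i + m + 2 * d)) by lia.
  replace (i + m + 2 * d + 2)%nat with (S (S (i + m + 2 * d))) by lia.
  simpl pow. rewrite !S_INR. pose proof (pos_INR d). field.
  repeat split; try apply INR_fact_neq_0; try (apply pow_nonzero; lra); lra.
Qed.

Lemma wcoef_pred_l (d i m : nat) :
  INR (i + m + 2 * d) * shiftr (fun k => wcoef d k m) i = INR i * wcoef d i m.
Proof.
  destruct i as [|i]; simpl shiftr; [simpl INR; ring|].
  unfold wcoef. replace (S i + m + 2 * d)%nat with (S (i + m + 2 * d)) by lia.
  rewrite !fact_simpl, !mult_INR. field.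
  repeat split; try apply INR_fact_neq_0; try (apply pow_nonzero; lra); apply not_0_INR; lia.
Qed.

Lemma wcoef_pred_r (d i m : nat) :
  INR (i + m + 2 * d) * shiftr (wcoef d i) m = INR m * wcoef d i m.
Proof.
  rewrite wcoef_sym, (Nat.add_comm i m), <- wcoef_pred_l.
  destruct m; simpl; [reflexivity|]. now rewrite wcoef_sym.
Qed.

Lemma ucoef_eq0 (n i m : nat) : (n < i + m)%nat -> ucoef n i m = 0.
Proof. intros H. unfold ucoef. now rewrite (proj2 (Nat.leb_gt _ _) H). Qed.

Lemma ucoef_wcoef (n i m : nat) : (i + m <= n)%nat -> ucoef n i m = wcoef (n - (i + m)) i m.
Proof. intros H. unfold ucoef. now rewrite (proj2 (Nat.leb_le _ _) H). Qed.

Lemma shiftr_ucoef_l (n i m : nat) : (i + m <= S n)%nat ->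
  shiftr (fun k => ucoef n k m) i = shiftr (fun k => wcoef (S n - (i + m)) k m) i.
Proof. destruct i as [|i]; intros H; simpl; [reflexivity|]. now rewrite ucoef_wcoef by lia. Qed.

Lemma shiftr_ucoef_r (n i m : nat) : (i + m <= S n)%nat ->
  shiftr (ucoef n i) m = shiftr (wcoef (S n - (i + m)) i) m.
Proof.
  destruct m as [|m]; intros H; [reflexivity|].
  replace (S n - (i + S m))%nat with (n - (i + m))%nat by lia.
  apply ucoef_wcoef; lia.
Qed.

Lemma ucoef_rec (n i m : nat) :
  ucoef (S n) i m = (INR (2 * n + 1) - INR (i + m)) * ucoef n i m
    + shiftr (fun k => ucoef n k m) i + shiftr (ucoef n i) m.
Proof.
  destruct (le_lt_dec (i + m) (S n)) as [Hq|Hq].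
  2: { rewrite !ucoef_eq0 by lia. destruct i, m; simpl; rewrite ?ucoef_eq0 by lia; ring. }
  rewrite ucoef_wcoef, shiftr_ucoef_l, shiftr_ucoef_r by lia.
  apply (Rmult_eq_reg_l (INR (i + m + 2 * (S n - (i + m))))); [|apply not_0_INR; lia].
  rewrite !Rmult_plus_distr_l, wcoef_pred_l, wcoef_pred_r.
  destruct (Nat.eq_dec (i + m) (S n)) as [Hb|Hb].
  - rewrite ucoef_eq0 by lia. rewrite Hb, Nat.sub_diag, <- Hb, !plus_INR. simpl. ring.
  - destruct (Nat.le_exists_sub (i + m) n) as [d [-> _]]; [lia|].
    rewrite ucoef_wcoef by lia.
    replace (S (d + (i + m)) - (i + m))%nat with (S d) by lia.
    replace (d + (i + m) - (i + m))%nat with d by lia.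
    rewrite wcoef_S. repeat rewrite ?plus_INR, ?mult_INR, ?S_INR. simpl INR.
    pose proof (pos_INR d). field. lra.
Qed.

Lemma psi_coef_eq0 (p n i m : nat) : (n < i + m)%nat -> psi_coef p n i m = 0.
Proof. intros H. unfold psi_coef. rewrite ucoef_eq0 by exact H. ring. Qed.

Lemma psi_coef_rec (p n i m : nat) :
  psi_coef p (S n) i m = (INR (i + m) - INR (2 * n + 1)) * psi_coef p n i m
    - shiftr (fun k => INR (p - k) * psi_coef p n k m) i - shiftr (psi_coef p n i) m.
Proof. unfold psi_coef. rewrite ucoef_rec. destruct i, m; simpl; ring. Qed.

Lemma sum_psi_coef_rec (p n : nat) (T : nat -> nat -> R) :
  sum_f_R0 (fun i => sum_f_R0 (fun m => psi_coef p (S n) i m * T i m) (S n)) (S n) =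
  sum_f_R0 (fun i => sum_f_R0 (fun m => psi_coef p n i m *
    ((INR (i + m) - INR (2 * n + 1)) * T i m - INR (p - i) * T (S i) m - T i (S m))) n) n.
Proof.
  rewrite <- (sum_f_R0_double_trunc _ n (S n)) by
    (auto; intros i m Him; rewrite psi_coef_eq0 by exact Him; ring).
  assert (Hshift_l : sum_f_R0 (fun i => sum_f_R0 (fun m =>
        shiftr (fun k => INR (p - k) * psi_coef p n k m) i * T i m) (S n)) (S n) =
      sum_f_R0 (fun i => sum_f_R0 (fun m =>
        INR (p - i) * psi_coef p n i m * T (S i) m) (S n)) (S n)).
  { rewrite sum_f_R0_swap, (sum_f_R0_swap (fun i m => INR (p - i) * psi_coef p n i m * T (S i) m)).
    apply sum_eq. intros m _. apply sum_f_R0_shiftr_mul. rewrite psi_coef_eq0 by lia. ring. }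
  assert (Hshift_r : sum_f_R0 (fun i => sum_f_R0 (fun m =>
        shiftr (psi_coef p n i) m * T i m) (S n)) (S n) =
      sum_f_R0 (fun i => sum_f_R0 (fun m => psi_coef p n i m * T i (S m)) (S n)) (S n)).
  { apply sum_eq. intros i _. apply sum_f_R0_shiftr_mul. apply psi_coef_eq0. lia. }
  transitivity
    (sum_f_R0 (fun i => sum_f_R0 (fun m =>
       (INR (i + m) - INR (2 * n + 1)) * psi_coef p n i m * T i m) (S n)) (S n)
   - sum_f_R0 (fun i => sum_f_R0 (fun m => INR (p - i) * psi_coef p n i m * T (S i) m) (S n)) (S n)
   - sum_f_R0 (fun i => sum_f_R0 (fun m => psi_coef p n i m * T i (S m)) (S n)) (S n)).
  - rewrite <- Hshift_l, <- Hshift_r, <- !minus_sum. apply sum_eq. intros i _.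
    rewrite <- !minus_sum. apply sum_eq. intros m _. rewrite psi_coef_rec. ring.
  - rewrite <- !minus_sum. apply sum_eq. intros i _.
    rewrite <- !minus_sum. apply sum_eq. intros m _. ring.
Qed.

Lemma psi_coef_diag (l nu m : nat) : (m <= nu <= l)%nat ->
  psi_coef (S l) l (l - nu) m = (-1) ^ l * INR (fact l) *
    (/ (2 ^ (nu - m) * INR (fact m)) * binom (l + 1) (nu + 1) * binom (l + nu - m) (nu - m)).
Proof.
  intros [Hm Hnu].
  destruct (Nat.le_exists_sub m nu Hm) as [d [-> _]].
  destruct (Nat.le_exists_sub (d + m) l Hnu) as [e [-> _]].
  unfold psi_coef, binom. rewrite ucoef_wcoef, falling_fact by lia.
  rewrite !(proj2 (Nat.leb_le _ _)) by lia. unfold wcoef, Binomial.C.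
  replace (e + (d + m) - (d + m))%nat with e by lia.
  replace (e + (d + m) - (e + m))%nat with d by lia.
  replace (d + m - m)%nat with d by lia.
  replace (S (e + (d + m)) - e)%nat with (d + m + 1)%nat by lia.
  replace (e + (d + m) + 1 - (d + m + 1))%nat with e by lia.
  replace (e + (d + m) + (d + m) - m)%nat with (e + m + 2 * d)%nat by lia.
  replace (e + m + 2 * d - d)%nat with (e + (d + m))%nat by lia.
  replace (e + (d + m) + 1)%nat with (S (e + (d + m))) by lia.
  field. repeat split; try apply INR_fact_neq_0; apply pow_nonzero; lra.
Qed.

Lemma falling_rev_coef (r l : nat) : (l <= r)%nat ->
  (-2) ^ (r - l) * falling r (r - l) * 2 ^ l * ((-1) ^ l * INR (fact l)) =
    2 ^ r * (-1) ^ r * INR (fact r).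
Proof.
  intros Hl. destruct (Nat.le_exists_sub l r Hl) as [d [-> _]].
  replace (d + l - l)%nat with d by lia.
  rewrite falling_fact by lia. replace (d + l - d)%nat with l by lia.
  replace (-2) with (-1 * 2) by ring. rewrite Rpow_mult_distr, !pow_add.
  field. apply INR_fact_neq_0.
Qed.

Definition DopR (phi : R -> R) (t : R) : R := / t * Derive phi t.

Definition DpowR (n : nat) (phi : R -> R) : R -> R := Nat.iter n DopR phi.

Lemma locally_open_interval (a b t : R) : a < t < b -> locally t (fun y => a < y < b).
Proof. exact (open_and _ _ (open_gt a) (open_lt b) t). Qed.

Lemma DopR_ext_loc (phi chi : R -> R) (t : R) :
  locally t (fun y => phi y = chi y) -> DopR phi t = DopR chi t.
Proof. intros H. unfold DopR. f_equal. now apply Derive_ext_loc. Qed.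

Lemma DopR_sum_plus (u : nat -> R -> R) (c : nat -> R) (g : R -> R) (a t : R) (N : nat) :
  (forall i, (i <= N)%nat -> ex_derive (u i) t) -> ex_derive g t ->
  DopR (fun y => sum_f_R0 (fun i => c i * u i y) N + a * g y) t =
    sum_f_R0 (fun i => c i * DopR (u i) t) N + a * DopR g t.
Proof.
  intros Hu Hg. unfold DopR.
  erewrite is_derive_unique.
  2: { apply (is_derive_plus (K := R_AbsRing) (V := R_NormedModule)
         (fun y => sum_f_R0 (fun i => c i * u i y) N) (fun y => a * g y)).
       - apply (is_derive_sum_f_R0 (fun i y => c i * u i y)). intros i Hi.
         apply is_derive_scal, Derive_correct, Hu, Hi.
       - apply is_derive_scal, Derive_correct, Hg. }
  rewrite Rmult_plus_distr_l, scal_sum. f_equal; [apply sum_eq; intros i _|]; simpl; ring.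
Qed.

Lemma DpowR_ext_unit_interval (n : nat) (phi chi : R -> R) :
  (forall y, 0 < y < 1 -> phi y = chi y) -> forall y, 0 < y < 1 -> DpowR n phi y = DpowR n chi y.
Proof.
  intros Heq. induction n as [|n IH]; intros y Hy; [now apply Heq|].
  apply DopR_ext_loc, (filter_imp _ _ IH), locally_open_interval, Hy.
Qed.

(** * The integrals G *)

Definition continuous_pos (w : R -> R) : Prop := forall x, 0 < x -> continuous w x.

Definition Gw (w : R -> R) (j : nat) (t : R) : R :=
  RInt (fun u => w u * (u ^ 2 + 1 - t ^ 2) ^ j) (1 - t) 1.

Lemma continuous_Gw_integrand (w : R -> R) (j : nat) (t x : R) : continuous_pos w -> 0 < x ->
  continuous (fun u => w u * (u ^ 2 + 1 - t ^ 2) ^ j) x.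
Proof.
  intros Hw Hx. apply (continuous_mult (K := R_AbsRing) w (fun u => (u ^ 2 + 1 - t ^ 2) ^ j)).
  - now apply Hw.
  - apply (ex_derive_continuous (K := R_AbsRing) (V := R_NormedModule)). auto_derive. exact I.
Qed.

Lemma ex_RInt_Gw_integrand (w : R -> R) (j : nat) (t a b : R) :
  continuous_pos w -> 0 < a -> 0 < b -> ex_RInt (fun u => w u * (u ^ 2 + 1 - t ^ 2) ^ j) a b.
Proof.
  intros Hw Ha Hb. apply (ex_RInt_continuous (V := R_CompleteNormedModule)). intros x Hx.
  apply continuous_Gw_integrand; [exact Hw|].
  pose proof (Rmin_pos a b Ha Hb). lra.
Qed.

Lemma continuous_pos_mul_sqr (w : R -> R) :
  continuous_pos w -> continuous_pos (fun u => w u * u ^ 2).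
Proof.
  intros Hw x Hx. apply (continuous_mult (K := R_AbsRing) w (fun u => u ^ 2)).
  - now apply Hw.
  - apply (ex_derive_continuous (K := R_AbsRing) (V := R_NormedModule)). auto_derive. exact I.
Qed.

Lemma Gw_S (w : R -> R) (j : nat) (t : R) : continuous_pos w -> t < 1 ->
  Gw w (S j) t = Gw (fun u => w u * u ^ 2) j t + (1 - t ^ 2) * Gw w j t.
Proof.
  intros Hw Ht. unfold Gw.
  rewrite <- (RInt_scal (V := R_CompleteNormedModule)) by (apply ex_RInt_Gw_integrand; auto; lra).
  rewrite <- (RInt_plus (V := R_CompleteNormedModule)).
  - apply RInt_ext. intros x _. unfold plus, scal; simpl. unfold mult; simpl. ring.
  - exact (ex_RInt_Gw_integrand (fun u => w u * u ^ 2) j t (1 - t) 1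
             (continuous_pos_mul_sqr w Hw) ltac:(lra) ltac:(lra)).
  - apply (ex_RInt_scal (V := R_CompleteNormedModule)), ex_RInt_Gw_integrand; auto; lra.
Qed.

Lemma is_derive_Gw_O (w : R -> R) (t : R) : continuous_pos w -> 0 < t < 1 ->
  is_derive (Gw w 0) t (w (1 - t)).
Proof.
  intros Hw Ht. unfold Gw.
  set (g := fun u => w u * (u ^ 2 + 1 - t ^ 2) ^ 0).
  change (is_derive (fun y => RInt g (1 - y) 1) t (w (1 - t))).
  replace (w (1 - t)) with (scal (-1) (opp (g (1 - t))))
    by (unfold g, scal, opp; simpl; unfold mult; simpl; ring).
  apply (is_derive_comp (fun a => RInt g a 1) (fun y => 1 - y)).
  - apply (is_derive_RInt' g (fun a => RInt g a 1) (1 - t) 1).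
    + apply (filter_imp (fun a => 0 < a)); [|apply (open_gt 0); lra].
      intros a Ha. apply (RInt_correct (V := R_CompleteNormedModule)).
      apply ex_RInt_Gw_integrand; auto; lra.
    + apply continuous_Gw_integrand; auto; lra.
  - auto_derive; [exact I | ring].
Qed.

(* Induction on [j] along [Gw_S], which changes [w] into [u |-> w u * u^2]: this avoids
   differentiating under the integral sign. *)
Lemma is_derive_Gw (j : nat) (w : R -> R) (t : R) : continuous_pos w -> 0 < t < 1 ->
  is_derive (Gw w j) t (w (1 - t) * (2 * (1 - t)) ^ j - 2 * INR j * t * Gw w (pred j) t).
Proof.
  revert w. induction j as [|j IH]; intros w Hw Ht.
  - replace (w (1 - t) * (2 * (1 - t)) ^ 0 - 2 * INR 0 * t * Gw w (pred 0) t) with (w (1 - t))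
      by (simpl; ring).
    now apply is_derive_Gw_O.
  - pose proof (IH (fun u => w u * u ^ 2) (continuous_pos_mul_sqr w Hw) Ht) as Hsqr.
    pose proof (IH w Hw Ht) as Hj.
    assert (Hpoly : is_derive (fun y => 1 - y ^ 2) t (- 2 * t)) by (auto_derive; [exact I | ring]).
    pose proof (is_derive_plus _ _ _ _ _ Hsqr (is_derive_mult _ _ _ _ _ Hpoly Hj Rmult_comm))
      as Hsum.
    apply (is_derive_ext_loc (fun y => Gw (fun u => w u * u ^ 2) j y + (1 - y ^ 2) * Gw w j y)).
    + apply (filter_imp (fun y => y < 1)); [|apply (open_lt 1); lra].
      intros y Hy. symmetry. now apply Gw_S.
    + eapply (is_derive_ext _ _ _ _ (fun y => eq_refl)).
      replace (w (1 - t) * (2 * (1 - t)) ^ S j - 2 * INR (S j) * t * Gw w (pred (S j)) t)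
        with (plus (w (1 - t) * (1 - t) ^ 2 * (2 * (1 - t)) ^ j
                    - 2 * INR j * t * Gw (fun u => w u * u ^ 2) (pred j) t)
                   (mult (- 2 * t) (Gw w j t) + mult (1 - t ^ 2)
                     (w (1 - t) * (2 * (1 - t)) ^ j - 2 * INR j * t * Gw w (pred j) t)));
        [exact Hsum|].
      unfold plus, mult; simpl. destruct j as [|j].
      * simpl. ring.
      * simpl pred. rewrite (Gw_S w j t Hw) by lra. rewrite !S_INR. simpl. ring.
Qed.

(** * The real-valued identity *)

Definition smooth_posR (h : R -> R) : Prop := forall (n : nat) (x : R), 0 < x -> ex_derive_n h n x.

Definition rhs_coef (m nu l : nat) (t : R) : R :=
  / (2 ^ (nu - m) * INR (fact m)) * binom (l + 1) (nu + 1) * binom (l + nu - m) (nu - m)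
  * / (t ^ l) * ((1 - t) ^ (nu + 1) / t ^ (nu - m)).

Section SmoothProfile.

Variable h : R -> R.
Hypothesis Hh : smooth_posR h.

Definition G0R (j : nat) : R -> R := Gw (fun u => u * h u) j.

Definition psi (p : nat) (t : R) : R := (1 - t) ^ p * h (1 - t) / t.

(* [t ^ (i + m) / t ^ (2 * n + 1)] stands for the possibly negative power t^(i+m-2n-1). *)
Definition psi_term (p n i m : nat) (t : R) : R :=
  t ^ (i + m) / t ^ (2 * n + 1) * (1 - t) ^ (p - i) * Derive_n h m (1 - t).

Definition psi_expansion (p n : nat) (t : R) : R :=
  sum_f_R0 (fun i => sum_f_R0 (fun m => psi_coef p n i m * psi_term p n i m t) n) n.

Lemma is_derive_psi_term (p n i m : nat) (t : R) : 0 < t < 1 ->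
  is_derive (psi_term p n i m) t
    (t * ((INR (i + m) - INR (2 * n + 1)) * psi_term p (S n) i m t
          - INR (p - i) * psi_term p (S n) (S i) m t - psi_term p (S n) i (S m) t)).
Proof.
  intros Ht. unfold psi_term.
  assert (Hd : ex_derive (Derive_n h m) (1 - t)) by (apply (Hh (S m)); lra).
  replace (S i + m)%nat with (S (i + m)) by lia.
  replace (i + S m)%nat with (S (i + m)) by lia.
  replace (p - S i)%nat with (pred (p - i)) by lia.
  replace (2 * S n + 1)%nat with (S (S (S (2 * n)))) by lia.
  replace (2 * n + 1)%nat with (S (2 * n)) by lia.
  change (Derive_n h (S m)) with (Derive (Derive_n h m)).
  generalize (i + m)%nat (p - i)%nat (2 * n)%nat. intros a b c.
  auto_derive.
  - split; [apply (pow_nonzero t (S c)); lra|]. split; [|exact I].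
    now replace (1 + - t) with (1 - t) by ring.
  - replace (1 + - t) with (1 - t) by ring.
    change (fun x => Derive_n h m x) with (Derive_n h m).
    (* [auto_derive] leaves [INR (S c)] unfolded. *)
    change (match c with 0%nat => 1 | S _ => INR c + 1 end) with (INR (S c)).
    assert (Htc : t ^ c <> 0) by (apply pow_nonzero; lra).
    destruct a, b; rewrite ?S_INR, ?INR_0; cbn [pred pow]; field; lra.
Qed.

Lemma is_derive_psi_expansion (p n : nat) (t : R) : 0 < t < 1 ->
  is_derive (psi_expansion p n) t (t * psi_expansion p (S n) t).
Proof.
  intros Ht.
  replace (t * psi_expansion p (S n) t) with
    (sum_f_R0 (fun i => sum_f_R0 (fun m => psi_coef p n i m *
      (t * ((INR (i + m) - INR (2 * n + 1)) * psi_term p (S n) i m t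
            - INR (p - i) * psi_term p (S n) (S i) m t - psi_term p (S n) i (S m) t))) n) n).
  - apply (is_derive_sum_f_R0
      (fun i y => sum_f_R0 (fun m => psi_coef p n i m * psi_term p n i m y) n)).
    intros i _. apply (is_derive_sum_f_R0 (fun m y => psi_coef p n i m * psi_term p n i m y)).
    intros m _. apply is_derive_scal, is_derive_psi_term, Ht.
  - unfold psi_expansion. rewrite sum_psi_coef_rec, scal_sum. apply sum_eq. intros i _.
    rewrite Rmult_comm, scal_sum. apply sum_eq. intros m _. ring.
Qed.

Lemma DpowR_psi (p n : nat) (t : R) : 0 < t < 1 -> DpowR n (psi p) t = psi_expansion p n t.
Proof.
  revert t. induction n as [|n IH]; intros t Ht.
  - unfold psi_expansion, psi_term, psi_coef, ucoef, wcoef, psi. simpl.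
    rewrite Nat.sub_0_r. field. lra.
  - change (DopR (DpowR n (psi p)) t = psi_expansion p (S n) t).
    rewrite (DopR_ext_loc _ (psi_expansion p n)) by
      apply (filter_imp _ _ IH), locally_open_interval, Ht.
    unfold DopR. rewrite (is_derive_unique _ _ _ (is_derive_psi_expansion p n t Ht)). field. lra.
Qed.

Lemma ex_derive_DpowR_psi (p n : nat) (t : R) : 0 < t < 1 -> ex_derive (DpowR n (psi p)) t.
Proof.
  intros Ht. exists (t * psi_expansion p (S n) t).
  apply (is_derive_ext_loc (psi_expansion p n)).
  - apply (filter_imp (fun y => 0 < y < 1)); [|now apply locally_open_interval].
    intros y Hy. symmetry. now apply DpowR_psi.
  - now apply is_derive_psi_expansion.
Qed.

Lemma continuous_pos_id_mul : continuous_pos (fun u => u * h u).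
Proof.
  intros x Hx. apply (continuous_mult (K := R_AbsRing) (fun u => u) h).
  - apply continuous_id.
  - apply (ex_derive_continuous (K := R_AbsRing) (V := R_NormedModule)), (Hh 1%nat x Hx).
Qed.

Lemma is_derive_G0R (j : nat) (t : R) : 0 < t < 1 ->
  is_derive (G0R j) t ((1 - t) * h (1 - t) * (2 * (1 - t)) ^ j - 2 * INR j * t * G0R (pred j) t).
Proof. intros Ht. exact (is_derive_Gw j _ t continuous_pos_id_mul Ht). Qed.

Lemma DopR_G0R (j : nat) (t : R) : 0 < t < 1 ->
  DopR (G0R j) t = 2 ^ j * psi (S j) t - 2 * INR j * G0R (pred j) t.
Proof.
  intros Ht. unfold DopR. rewrite (is_derive_unique _ _ _ (is_derive_G0R j t Ht)).
  unfold psi. rewrite Rpow_mult_distr. simpl. field. lra.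
Qed.

Lemma DpowR_G0R (k j : nat) (t : R) : 0 < t < 1 ->
  DpowR (S k) (G0R j) t =
    sum_f_R0 (fun i => (-2) ^ i * falling j i * 2 ^ (j - i) * DpowR (k - i) (psi (S (j - i))) t) k
    + (-2) ^ S k * falling j (S k) * G0R (j - S k) t.
Proof.
  revert t. induction k as [|k IH]; intros t Ht.
  - change (DpowR 1 (G0R j) t) with (DopR (G0R j) t). rewrite DopR_G0R by exact Ht.
    simpl. rewrite Nat.sub_0_r. replace (j - 1)%nat with (pred j) by lia. ring.
  - change (DpowR (S (S k)) (G0R j) t) with (DopR (DpowR (S k) (G0R j)) t).
    rewrite (DopR_ext_loc _ _ t (filter_imp _ _ IH (locally_open_interval 0 1 t Ht))).
    rewrite DopR_sum_plus;
      [|intros i _; now apply ex_derive_DpowR_psi | eexists; now apply is_derive_G0R].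
    rewrite DopR_G0R, tech5, Nat.sub_diag by exact Ht.
    replace (pred (j - S k)) with (j - S (S k))%nat by lia.
    change (falling j (S (S k))) with (falling j (S k) * INR (j - S k)).
    rewrite (sum_eq _
      (fun i => (-2) ^ i * falling j i * 2 ^ (j - i) * DpowR (S k - i) (psi (S (j - i))) t))
      by (intros i Hi; now replace (S k - i)%nat with (S (k - i)) by lia).
    simpl. ring.
Qed.

Lemma DpowR_psi_diag (l : nat) (t : R) : 0 < t < 1 ->
  t * DpowR l (psi (S l)) t = (-1) ^ l * INR (fact l) *
    sum_f_R0 (fun nu => sum_f_R0 (fun m => rhs_coef m nu l t * Derive_n h m (1 - t)) nu) l.
Proof.
  intros Ht. rewrite DpowR_psi by exact Ht. unfold psi_expansion.
  rewrite <- (sum_f_R0_skip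
    (fun i => sum_f_R0 (fun m => psi_coef (S l) l i m * psi_term (S l) l i m t) l)).
  rewrite !scal_sum. apply sum_eq. intros nu Hnu.
  rewrite (sum_f_R0_trunc _ nu l Hnu) by (intros m Hm; rewrite psi_coef_eq0 by lia; ring).
  rewrite (Rmult_comm _ t), (Rmult_comm _ ((-1) ^ l * _)), !scal_sum. apply sum_eq. intros m Hm.
  rewrite psi_coef_diag by lia. unfold psi_term, rhs_coef.
  replace (S l - (l - nu))%nat with (nu + 1)%nat by lia.
  replace (2 * l + 1)%nat with ((l - nu + m) + 1 + l + (nu - m))%nat by lia.
  rewrite !pow_add. field.
  repeat split; try apply INR_fact_neq_0; try lra; apply pow_nonzero; lra.
Qed.

Lemma Derive_DpowR_G0R (r : nat) (t : R) : 0 < t < 1 ->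
  Derive (DpowR r (G0R r)) t = 2 ^ r * (-1) ^ r * INR (fact r) *
    sum_n_m (fun m => sum_n_m (fun nu => sum_n_m (fun l =>
      rhs_coef m nu l t * Derive_n h m (1 - t)) nu r) m r) 0 r.
Proof.
  intros Ht.
  transitivity (t * DpowR (S r) (G0R r) t).
  { change (DpowR (S r) (G0R r) t) with (/ t * Derive (DpowR r (G0R r)) t). field. lra. }
  rewrite DpowR_G0R by exact Ht.
  replace (falling r (S r)) with 0 by (cbn [falling]; rewrite Nat.sub_diag, INR_0; ring).
  rewrite Rmult_0_r, Rmult_0_l, Rplus_0_r, <- sum_f_R0_triangle3.
  rewrite <- (sum_f_R0_skip
    (fun i => (-2) ^ i * falling r i * 2 ^ (r - i) * DpowR (r - i) (psi (S (r - i))) t)).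
  rewrite !scal_sum. apply sum_eq. intros l Hl.
  replace (r - (r - l))%nat with l by lia.
  rewrite <- (falling_rev_coef r l Hl).
  transitivity ((-2) ^ (r - l) * falling r (r - l) * 2 ^ l * (t * DpowR l (psi (S l)) t)); [ring|].
  rewrite DpowR_psi_diag by exact Ht. ring.
Qed.

End SmoothProfile.

(** * Complex-valued functions *)

Lemma sum_n_m_C (F : nat -> C) (a b : nat) :
  sum_n_m (G := C_AbelianMonoid) F a b =
    (sum_n_m (fun i => Re (F i)) a b, sum_n_m (fun i => Im (F i)) a b).
Proof.
  induction b as [|b IH].
  - destruct a as [|a].
    + rewrite !sum_n_n. apply surjective_pairing.
    + rewrite !sum_n_m_zero by lia. reflexivity.
  - destruct (le_lt_dec a (S b)) as [Hab|Hab].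
    + rewrite !sum_n_Sm, IH by exact Hab. reflexivity.
    + rewrite !sum_n_m_zero by exact Hab. reflexivity.
Qed.

Lemma Dpow_pair (k : nat) (phi : R -> C) (y : R) :
  Dpow k phi y = (DpowR k (fun z => Re (phi z)) y, DpowR k (fun z => Im (phi z)) y).
Proof.
  revert y. induction k as [|k IH]; intros y; [apply surjective_pairing|].
  change (Dop (Dpow k phi) y = (/ y * Derive (DpowR k (fun z => Re (phi z))) y,
                                 / y * Derive (DpowR k (fun z => Im (phi z))) y)).
  unfold Dop, Cderive. unfold scal; simpl. unfold prod_scal, scal; simpl. unfold mult; simpl.
  f_equal; f_equal; apply Derive_ext; intros z; now rewrite IH.
Qed.

Lemma G0_pair (f : R -> C) (j : nat) (y : R) : smooth_pos f -> y < 1 ->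
  G0 f j y = (G0R (fun u => Re (f u)) j y, G0R (fun u => Im (f u)) j y).
Proof.
  intros Hf Hy. unfold G0, G0R, Gw. apply (is_RInt_unique (V := C_R_CompleteNormedModule)).
  apply (is_RInt_fct_extend_pair (U := R_NormedModule) (V := R_NormedModule)).
  - eapply is_RInt_ext; [|apply (RInt_correct (V := R_CompleteNormedModule))].
    + intros x _. unfold scal; simpl. unfold prod_scal, scal; simpl. unfold mult; simpl.
      unfold Re. ring.
    + apply (ex_RInt_Gw_integrand (fun u => u * Re (f u))); [|lra|lra].
      apply continuous_pos_id_mul. intros n x Hx. apply (Hf n x Hx).
  - eapply is_RInt_ext; [|apply (RInt_correct (V := R_CompleteNormedModule))].
    + intros x _. unfold scal; simpl. unfold prod_scal, scal; simpl. unfold mult; simpl.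
      unfold Im. ring.
    + apply (ex_RInt_Gw_integrand (fun u => u * Im (f u))); [|lra|lra].
      apply continuous_pos_id_mul. intros n x Hx. apply (Hf n x Hx).
Qed.

Lemma rhs35_pair (f : R -> C) (r : nat) (t : R) :
  rhs35 f r t =
    (2 ^ r * (-1) ^ r * INR (fact r) * sum_n_m (fun m => sum_n_m (fun nu => sum_n_m (fun l =>
       rhs_coef m nu l t * Derive_n (fun y => Re (f y)) m (1 - t)) nu r) m r) 0 r,
     2 ^ r * (-1) ^ r * INR (fact r) * sum_n_m (fun m => sum_n_m (fun nu => sum_n_m (fun l =>
       rhs_coef m nu l t * Derive_n (fun y => Im (f y)) m (1 - t)) nu r) m r) 0 r).
Proof.
  unfold rhs35. rewrite sum_n_m_C.
  apply injective_projections; simpl; apply (f_equal2 Rmult); try reflexivity;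
    apply sum_n_m_ext; intros m;
    rewrite sum_n_m_C; apply sum_n_m_ext; intros nu; now rewrite sum_n_m_C.
Qed.

Theorem lemma3p5 (f : R -> C) (rho : R) :
  rho < 1 ->
  smooth_pos f ->
  (forall u : R, 0 <= u -> rho < u -> f u = 0) ->
  forall (r : nat) (t : R), 0 < t < 1 ->
    Cderive (Dpow r (G0 f r)) t = rhs35 f r t.
Proof.
  intros _ Hf _ r t Ht.
  assert (HRe : smooth_posR (fun y => Re (f y))) by (intros n x Hx; apply (Hf n x Hx)).
  assert (HIm : smooth_posR (fun y => Im (f y))) by (intros n x Hx; apply (Hf n x Hx)).
  assert (Hpair : forall y, 0 < y < 1 -> Dpow r (G0 f r) y =
      (DpowR r (G0R (fun u => Re (f u)) r) y, DpowR r (G0R (fun u => Im (f u)) r) y)).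
  { intros y Hy. rewrite Dpow_pair.
    f_equal; apply DpowR_ext_unit_interval; try exact Hy;
      intros z Hz; now rewrite G0_pair by (auto; lra). }
  rewrite rhs35_pair, <- !Derive_DpowR_G0R by assumption.
  unfold Cderive. f_equal; apply Derive_ext_loc;
    apply (filter_imp (fun y => 0 < y < 1)); try (now apply locally_open_interval);
    intros y Hy; now rewrite Hpair.
Qed.
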